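(* Let $\lambda\in(1,2)$. The map sending a sequence $(a_j)_{j=1}^\infty\in\{0,1\}^{\mathbb{N}}$ to the $S$-gap shift $X(S)$ with $S=\{j-1: a_j=1\}$ is a bijection between the set of sequences $(a_j)_{j=1}^\infty\in\{0,1\}^{\mathbb{N}}$ satisfying $\sum_{j=1}^\infty a_j\lambda^{-j}=1$ and the set of $S$-gap shifts with entropy $\log\lambda$.
   Context: For a nonempty set $S\subseteq\{0,1,2,\dots\}$, the $S$-gap shift $X(S)\subseteq\{0,1\}^{\mathbb{Z}}$ is the set of bi-infinite binary sequences in which the number of consecutive zeros between ones is always an element of $S$ (points have the form $\cdots10^{n_{-1}}10^{n_0}10^{n_1}\cdots$ with $n_j\in S$). The entropy of a shift $X$ is $h(X)=\lim_n\frac1n\log|\mathcal{B}_n(X)|$, where $\mathcal{B}_n(X)$ is the set of words of length $n$ occurring in points of $X$ and $\log$ is to base $2$. *)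

From HB Require Import structures.
From mathcomp Require Import all_boot all_order all_algebra.
From mathcomp Require Import all_classical all_reals all_analysis.
Set Implicit Arguments. Unset Strict Implicit. Unset Printing Implicit Defensive.
Import Order.TTheory GRing.Theory Num.Theory.
Import numFieldNormedType.Exports.
Local Open Scope classical_set_scope.
Local Open Scope ring_scope.

Definition bipoint := int -> bool.

(* The S-gap shift X(S): points of the form ... 1 0^{n_{-1}} 1 0^{n_0} 1 0^{n_1} ...
   with every n_j in S.  p enumerates (in increasing order) the positions of
   the symbol 1, and consecutive ones are separated by n zeros with n in S. *)
Definition gap_shift (S : set nat) : set bipoint :=
  [set x | exists p : int -> int,
      (forall j : int, exists2 n : nat, S n & p (j + 1) = p j + n%:Z + 1)
      /\ (forall i : int, x i = true <-> exists j : int, p j = i)].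

Definition occurs (X : set bipoint) (n : nat) (w : n.-tuple bool) : Prop :=
  exists2 x, X x & exists i : int, forall k : 'I_n, tnth w k = x (i + (k : nat)%:Z).

Definition words (X : set bipoint) (n : nat) : {set n.-tuple bool} :=
  [set w : n.-tuple bool | `[< occurs X w >]].

Definition log2 {R : realType} (x : R) : R := ln x / ln 2.

Definition has_entropy {R : realType} (X : set bipoint) (h : R) : Prop :=
  (fun n : nat => log2 (#|words X n|%:R : R) / n%:R) @ \oo --> h.

From HB Require Import structures.
From mathcomp Require Import all_boot all_order all_algebra.
From mathcomp Require Import all_classical all_reals all_analysis.
From mathcomp Require Import zify ring lra.
Set Implicit Arguments. Unset Strict Implicit. Unset Printing Implicit Defensive.
Import Order.TTheory GRing.Theory Num.Theory.
Import numFieldNormedType.Exports.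
Local Open Scope classical_set_scope.
Local Open Scope ring_scope.

(* Encode S by b and let F(x) = sum_(n in S) x^-(n+1), which decreases in x.
   Cutting a word at its ones, the number c(n) of words of length n in which
   every complete gap lies in S obeys c(n) = 1 + sum_(s in S, s < n) c(n-1-s),
   so F(x) <= q < 1 gives c(n) = O(x^n); symmetrically, concatenating gaps
   from S, a partial sum of F(y) reaching 1 gives at least y^n / const words
   of X(S).  Hence h(X(S)) <= log x whenever F(x) < 1 and h(X(S)) >= log y
   whenever F(y) >= 1.  If F(lambda) = 1 this pins h(X(S)) = log lambda.
   Conversely, if some partial sum of F(lambda) exceeds 1, it still reaches 1
   at some y > lambda (Bernoulli's inequality), and if F(lambda) < 1, then
   F(x) < 1 for some x < lambda (Bernoulli on the first K terms, a geometric
   bound on the tail); both contradict h(X(S)) = log lambda.  Finally, the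
   periodic point (1 0^s)^oo lies in X(S) iff s is in S, so S is determined
   by X(S). *)

(** * Counting the words of a gap shift *)

Fixpoint bitseqs (n : nat) : seq bitseq :=
  if n is n'.+1 then map (cons false) (bitseqs n') ++ map (cons true) (bitseqs n')
  else [:: [::]].

Lemma mem_bitseqs n w : (w \in bitseqs n) = (size w == n).
Proof.
elim: n w => [|n IHn] [|c w] //=; rewrite mem_cat.
  by apply/negbTE; rewrite negb_or; apply/andP; split; apply/mapP => -[].
have consN c' : (c :: w \in map (cons c') (bitseqs n)) = (c == c') && (w \in bitseqs n).
  apply/mapP/andP => [[u ? [-> ->]] // | [/eqP -> ?]].
  by exists w.
by rewrite !consN IHn eqSS; clear consN; case: c; rewrite /= ?orbF.
Qed.

Lemma uniq_bitseqs n : uniq (bitseqs n).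
Proof.
have consI c : injective (cons c) by move=> ? ? [].
elim: n => [|n IHn] //=; rewrite cat_uniq !(map_inj_uniq (consI _ _)) IHn andbT /=.
by apply/hasPn => _ /mapP[u _ ->]; apply/mapP => -[].
Qed.

Lemma count_bitseqsS (P : pred bitseq) n :
  count P (bitseqs n.+1) =
  (count (fun w => P (false :: w)) (bitseqs n) + count (fun w => P (true :: w)) (bitseqs n))%N.
Proof. by rewrite /= count_cat !count_map. Qed.

Lemma card_tuple_bitseqs (P : pred bitseq) n :
  #|[set w : n.-tuple bool | P w]%SET| = count P (bitseqs n).
Proof.
transitivity (count (P \o val) (enum {: n.-tuple bool})).
  rewrite cardE /enum_mem size_filter count_filter; apply: eq_count => w.
  by rewrite /= finset.inE andbT.
rewrite -count_map; apply/permP/uniq_perm; first by rewrite map_inj_uniq ?enum_uniq //; exact: val_inj.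
  exact: uniq_bitseqs.
move=> w; rewrite mem_bitseqs; apply/mapP/eqP => [[t _ ->]|Hw]; first exact: size_tuple.
by exists (Tuple (introT eqP Hw)); rewrite ?mem_enum.
Qed.

Definition gap_psum {R : numFieldType} (b : nat -> bool) (x : R) (N : nat) : R :=
  \sum_(k < N) (b k)%:R * x ^- k.+1.

Section GapPsum.
Variables (R : realFieldType) (b : nat -> bool).

Lemma big_pred_natr (f : nat -> R) n :
  \sum_(i < n | b i) f i = \sum_(i < n) (b i)%:R * f i.
Proof. by rewrite big_mkcond; apply: eq_bigr => i _; case: (b i); rewrite ?mul1r ?mul0r. Qed.

Lemma gap_psum_mono (x : R) : 0 < x -> {homo gap_psum b x : N N' / (N <= N')%N >-> N <= N'}.
Proof.
move=> x0 N N' le; rewrite /gap_psum -(subnKC le) big_split_ord /= lerDl.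
by apply: sumr_ge0 => i _; rewrite mulr_ge0 ?ler0n ?invr_ge0 ?exprn_ge0 ?ltW.
Qed.

Lemma gap_psum_convolution (x c : R) n : x != 0 ->
  \sum_(i < n) (b i)%:R * (c * x ^+ (n.-1 - i)) = c * x ^+ n * gap_psum b x n.
Proof.
move=> x0; rewrite /gap_psum mulr_sumr; apply: eq_bigr => i _.
have -> : x ^+ n = x ^+ (n.-1 - i) * x ^+ i.+1.
  by rewrite -exprD; congr (_ ^+ _); have := ltn_ord i; lia.
by field; rewrite expf_neq0.
Qed.

Lemma gap_psum_witness (y t : R) N : 0 < t -> t <= gap_psum b y N ->
  exists2 m, b m & t <= gap_psum b y m.+1.
Proof.
move=> t0; elim: N => [|N IHN]; first by rewrite /gap_psum big_ord0 leNgt t0.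
case bN: (b N); first by exists N.
by rewrite /gap_psum big_ord_recr /= bN mul0r addr0.
Qed.

Lemma gap_psum_ratio (y z : R) N : 0 < y -> 0 < z ->
  gap_psum b z N = \sum_(k < N) (y / z) ^+ k.+1 * ((b k)%:R * y ^- k.+1).
Proof.
move=> y0 z0; apply: eq_bigr => k _; rewrite exprMn exprVn; field.
by rewrite !expf_neq0 ?gt_eqF.
Qed.

Lemma gap_psum_scale_le (y z : R) N : 0 < y -> y <= z ->
  gap_psum b z N <= y / z * gap_psum b y N.
Proof.
move=> y0 yz; have z0 : 0 < z by apply: lt_le_trans yz.
have r0 : 0 <= y / z by rewrite divr_ge0 ?ltW.
rewrite (gap_psum_ratio _ y0 z0) mulr_sumr; apply: ler_sum => k _.
apply: ler_wpM2r; first by rewrite mulr_ge0 ?ler0n // invr_ge0 exprn_ge0 // ltW.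
by rewrite -[X in _ <= X]expr1 ler_wiXn2l // ler_pdivrMr // mul1r.
Qed.

Lemma gap_psum_scale_ge (y z : R) N : 0 < y -> y <= z ->
  (y / z) ^+ N * gap_psum b y N <= gap_psum b z N.
Proof.
move=> y0 yz; have z0 : 0 < z by apply: lt_le_trans yz.
have r0 : 0 <= y / z by rewrite divr_ge0 ?ltW.
rewrite (gap_psum_ratio _ y0 z0) mulr_sumr; apply: ler_sum => k _.
apply: ler_wpM2r; first by rewrite mulr_ge0 ?ler0n // invr_ge0 exprn_ge0 // ltW.
by rewrite ler_wiXn2l // ler_pdivrMr // mul1r.
Qed.

End GapPsum.

Section AdmissibleWords.
Variable b : nat -> bool.

(* [j] is the number of zeros read since the last one. *)
Fixpoint admissible_from (j : nat) (w : bitseq) : bool :=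
  match w with
  | [::] => true
  | false :: w' => admissible_from j.+1 w'
  | true :: w' => b j && admissible_from 0 w'
  end.

Fixpoint admissible (w : bitseq) : bool :=
  match w with
  | [::] => true
  | false :: w' => admissible w'
  | true :: w' => admissible_from 0 w'
  end.

Definition adm_count (j n : nat) : nat := count (admissible_from j) (bitseqs n).

Lemma adm_countS j n : adm_count j n.+1 = (adm_count j.+1 n + b j * adm_count 0 n)%N.
Proof.
rewrite /adm_count count_bitseqsS /=; congr addn.
by case: (b j); rewrite ?mul1n ?mul0n // count_pred0.
Qed.

Lemma adm_count_unroll j n :
  adm_count j n = (1 + \sum_(i < n | b (j + i)%N) adm_count 0 (n.-1 - i))%N.
Proof.
elim: n j => [|n IHn] j; first by rewrite big_ord0.
rewrite adm_countS IHn [in RHS]big_mkcond big_ord_recl /= addn0 subn0 [in LHS]big_mkcond.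
under [in RHS]eq_bigr => i _ do rewrite /bump leq0n add1n addnS -addSn subnS predn_sub.
by case: (b j); rewrite ?mul1n ?mul0n ?addn0 // -addnA (addnC (\sum_(_ < _) _)).
Qed.

Lemma adm_count0_unroll n :
  adm_count 0 n = (1 + \sum_(i < n | b i) adm_count 0 (n.-1 - i))%N.
Proof. by rewrite adm_count_unroll. Qed.

Lemma count_admissible n : count admissible (bitseqs n) = (1 + \sum_(m < n) adm_count 0 m)%N.
Proof.
elim: n => [|n IHn]; first by rewrite big_ord0.
by rewrite count_bitseqsS /= IHn big_ord_recr /= addnA.
Qed.

End AdmissibleWords.

Section UpperBound.
Variables (R : realFieldType) (b : nat -> bool) (x q : R).
Hypotheses (x_gt1 : 1 < x) (q_lt1 : q < 1) (psum_le : forall N, gap_psum b x N <= q).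

Let x_gt0 : 0 < x. Proof. exact: lt_trans x_gt1. Qed.

Lemma adm_count0_le n : (adm_count b 0 n)%:R <= x ^+ n.+1 / (1 - q).
Proof.
elim/ltn_ind: n => n IHn.
set k := (1 - q)^-1; have k0 : 0 < k by rewrite invr_gt0 subr_gt0.
have kq : k * (1 - q) = 1 by rewrite mulVf // subr_eq0 gt_eqF.
rewrite adm_count0_unroll natrD natr_sum (big_pred_natr b (fun i => (adm_count b 0 (n.-1 - i))%:R)).
apply: (@le_trans _ _ (1 + \sum_(i < n) (b i)%:R * (x * k * x ^+ (n.-1 - i)))).
  rewrite lerD2l; apply: ler_sum => i _; apply: ler_wpM2l; first exact: ler0n.
  by rewrite mulrAC -exprS; apply: IHn; have := ltn_ord i; lia.
rewrite gap_psum_convolution ?gt_eqF //.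
have -> : x * k * x ^+ n = x ^+ n.+1 * k by rewrite exprS; ring.
have A1 : 1 <= x ^+ n.+1 by rewrite exprn_ege1 ?ltW.
have := ler_wpM2l (mulr_ge0 (ltW (lt_le_trans ltr01 A1)) (ltW k0)) (psum_le n).
move: (x ^+ n.+1) (gap_psum b x n) A1 => A F A1 AF; nra.
Qed.

Lemma count_admissible_le : exists2 C : R, 1 <= C & forall n, (count (admissible b) (bitseqs n))%:R <= C * x ^+ n.
Proof.
set k := (1 - q)^-1; have k0 : 0 < k by rewrite invr_gt0 subr_gt0.
have x1 : 0 < x - 1 by rewrite subr_gt0.
exists (1 + k * x / (x - 1)); first by rewrite lerDl divr_ge0 ?mulr_ge0 ?ltW.
move=> n; rewrite count_admissible natrD natr_sum.
have geom : \sum_(m < n) x ^+ m.+1 = x * (x ^+ n - 1) / (x - 1).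
  rewrite subrX1 mulrCA [(x - 1) * _]mulrC mulfK ?gt_eqF // mulr_sumr.
  by apply: eq_bigr => i _; rewrite exprS.
have : \sum_(m < n) (adm_count b 0 m)%:R <= \sum_(m < n) x ^+ m.+1 * k.
  by apply: ler_sum => m _; exact: adm_count0_le.
rewrite -mulr_suml geom.
have xn : 1 <= x ^+ n by rewrite exprn_ege1 ?ltW.
have c0 : 0 <= k * x / (x - 1) by rewrite divr_ge0 ?mulr_ge0 ?ltW.
move: (x ^+ n) xn => X xn S.
suff : x * (X - 1) / (x - 1) * k <= k * x / (x - 1) * X by lra.
have -> : x * (X - 1) / (x - 1) * k = k * x / (x - 1) * (X - 1) by ring.
by rewrite ler_wpM2l // gerBl.
Qed.

End UpperBound.

Section GapPoints.
Variable b : nat -> bool.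

Definition gap_seq (p : int -> int) : Prop :=
  forall j : int, exists2 n : nat, b n & p (j + 1) = p j + n%:Z + 1.

Definition ones_at (p : int -> int) (x : bipoint) : Prop :=
  forall i : int, x i = true <-> exists j, p j = i.

Variable p : int -> int.
Hypothesis p_gap : gap_seq p.

Lemma gap_seq_homo : {homo p : i j / i < j}.
Proof.
have step k i : p i < p (i + k.+1%:Z).
  elim: k => [|k IHk]; first by have [n _ ->] := p_gap i; lia.
  have -> : i + k.+2%:Z = i + k.+1%:Z + 1 by lia.
  by have [n _ ->] := p_gap (i + k.+1%:Z); lia.
move=> i j lt_ij; case E: (j - i - 1) => [k|k]; last by lia.
by have -> : j = i + k.+1%:Z by lia.
Qed.

Lemma gap_seq_leE i j : (p i <= p j) = (i <= j).
Proof. exact: (le_mono gap_seq_homo). Qed.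

Lemma gap_seq_ltE i j : (p i < p j) = (i < j).
Proof. by rewrite !ltNge gap_seq_leE. Qed.

Lemma gap_seq_gap x (u : int) (j : nat) : ones_at p x ->
  x u -> x (u + j.+1%:Z) -> (forall t : nat, (0 < t <= j)%N -> x (u + t%:Z) = false) -> b j.
Proof.
move=> Hx /Hx[t0 E0] /Hx[t1 E1] zeros.
have [n bn En] := p_gap t0.
have n_le_j : (n <= j)%N.
  rewrite leqNgt; apply/negP => jn.
  have := gap_seq_ltE t1 (t0 + 1); have := gap_seq_ltE t0 t1; rewrite En E0 E1; lia.
case: (ltngtP n j) n_le_j => [nj|//|<- //] _.
have : x (u + n.+1%:Z) by apply/Hx; exists (t0 + 1); rewrite En E0; lia.
by rewrite zeros //; lia.
Qed.

Definition window (x : bipoint) (i : int) (m : nat) : bitseq :=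
  [seq x (i + k%:Z) | k <- iota 0 m].

Lemma windowS x i m : window x i m.+1 = x i :: window x (i + 1) m.
Proof.
rewrite /window /= addr0 (iotaDl 1 0) -map_comp.
by congr cons; apply: eq_map => k /=; congr x; lia.
Qed.

Lemma admissible_from_window x : ones_at p x -> forall m (u : int) (j : nat), x u ->
  (forall t : nat, (0 < t <= j)%N -> x (u + t%:Z) = false) ->
  admissible_from b j (window x (u + j.+1%:Z) m).
Proof.
move=> Hx; elim=> [|m IHm] u j xu zeros //.
rewrite windowS /=; case E: (x (u + j.+1%:Z)).
  rewrite (gap_seq_gap Hx xu E zeros) /=.
  by apply: IHm => // t; lia.
have -> : u + j.+1%:Z + 1 = u + j.+2%:Z by lia.
apply: IHm => // t /andP[t0 tj]; case: (ltngtP t j.+1) => [tj'|tj'|->] //; last by lia.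
by apply: zeros; lia.
Qed.

Lemma admissible_window x : ones_at p x -> forall m i, admissible b (window x i m).
Proof.
move=> Hx; elim=> [|m IHm] i //.
rewrite windowS /=; case E: (x i); last exact: IHm.
by apply: (admissible_from_window Hx m (j := 0) E) => t; lia.
Qed.

End GapPoints.

Lemma words_admissible (b : nat -> bool) n (w : n.-tuple bool) :
  w \in words (gap_shift [set k | b k]) n -> admissible b w.
Proof.
rewrite /words finset.inE => /asboolP [x [p [Hp Hx]] [i Hw]].
have -> : val w = window x i n.
  rewrite -[val w](map_tnth_enum w) /window -val_enum_ord -map_comp.
  by apply: eq_map => k /=; rewrite Hw.
exact: (admissible_window Hp Hx).
Qed.

Lemma card_words_le (b : nat -> bool) n :
  (#|words (gap_shift [set k | b k]) n| <= count (admissible b) (bitseqs n))%N.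
Proof.
rewrite -card_tuple_bitseqs; apply/subset_leq_card/fintype.subsetP => w Hw.
by rewrite finset.inE; exact: words_admissible.
Qed.

Lemma card_words_le_geom (R : realFieldType) (b : nat -> bool) (x q : R) :
  1 < x -> q < 1 -> (forall N, gap_psum b x N <= q) ->
  exists2 C : R, 1 <= C & forall n, #|words (gap_shift [set k | b k]) n|%:R <= C * x ^+ n.
Proof.
move=> x1 q1 Fq; have [C C1 HC] := count_admissible_le x1 q1 Fq.
by exists C => // n; apply: le_trans (HC n); rewrite ler_nat card_words_le.
Qed.

Lemma mulz_out_0m (m t : int) : 0 < m -> t * m <= 0 \/ m <= t * m.
Proof.
move=> m0; have [t0|t1] : t <= 0 \/ 1 <= t by lia.
  by left; nia.
by right; nia.
Qed.

Section Realizable.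
Variable b : nat -> bool.

(* [w] is read off some point of X(S) from a position carrying a one. *)
Definition realizable (w : bitseq) : Prop :=
  exists p, gap_seq b p /\ (exists j, p j = 0) /\
    forall k : nat, (k < size w)%N -> nth false w k = `[< exists j, p j = k%:Z >].

Lemma realizable_words n (w : n.-tuple bool) :
  realizable w -> w \in words (gap_shift [set k | b k]) n.
Proof.
move=> [p [Hp [_ Hw]]]; rewrite finset.inE; apply/asboolP.
exists (fun i => `[< exists j, p j = i >]).
  by exists p; split => // i; split => [/asboolP|/asboolP].
by exists 0 => k; rewrite (tnth_nth false) Hw ?size_tuple.
Qed.

Lemma card_words_ge n :
  (count (fun w => `[< realizable w >]) (bitseqs n) <= #|words (gap_shift [set k | b k]) n|)%N.
Proof.
rewrite -card_tuple_bitseqs; apply/subset_leq_card/fintype.subsetP => w.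
by rewrite finset.inE => /asboolP; exact: realizable_words.
Qed.

Lemma realizable_one_gap m j : b m -> (j <= m)%N -> realizable (true :: nseq j false).
Proof.
move=> bm jm; exists (fun t => t * m.+1%:Z); split.
  by move=> t; exists m => //; rewrite mulrDl mul1r; lia.
split; first by exists 0; rewrite mul0r.
move=> [|k] /=; rewrite size_nseq => lt.
  by symmetry; apply/asboolP; exists 0; rewrite mul0r.
rewrite nth_nseq if_same; symmetry; apply/asboolF => -[t pt].
by have := @mulz_out_0m m.+1%:Z t isT; lia.
Qed.

Lemma nth_nseq_cat (j k : nat) (s : bitseq) :
  nth false (nseq j false ++ s) k = if (k < j)%N then false else nth false s (k - j).
Proof. by rewrite nth_cat size_nseq nth_nseq; case: (k < j)%N. Qed.

Lemma realizable_cons j w :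
  b j -> realizable (true :: w) -> realizable (true :: nseq j false ++ true :: w).
Proof.
move=> bj [p [Hp [[t0 pt0] Hw]]].
have p_lt0 t : t < t0 -> p t < 0 by rewrite -pt0 (gap_seq_ltE Hp).
have p_ge0 t : t0 <= t -> 0 <= p t by rewrite -pt0 (gap_seq_leE Hp).
(* shift the old ones right by j+1 and put ones at -(j+1)k, k >= 0, before them *)
pose p' t := if t < t0 then (t - t0 + 1) * j.+1%:Z else p t + j.+1%:Z.
have p'_le0 t : t < t0 -> p' t <= 0 by move=> t_lt; rewrite /p' t_lt; nia.
have p'_ge t : t0 <= t -> p' t = p t + j.+1%:Z by move=> t_ge; rewrite /p' ltNge t_ge.
have p'_pred : p' (t0 - 1) = 0 by rewrite /p' (_ : t0 - 1 < t0); [nia | lia].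
exists p'; split.
  move=> t; have [h|[h|h]] : t + 1 < t0 \/ t + 1 = t0 \/ t0 <= t by lia.
  - by exists j => //; rewrite /p' h (_ : t < t0); [nia | lia].
  - by exists j => //; rewrite p'_ge ?h // /p' (_ : t < t0); [rewrite pt0; nia | lia].
  - by have [n bn En] := Hp t; exists n => //; rewrite !p'_ge ?En //; lia.
split; first by exists (t0 - 1).
move=> [|k] /=; rewrite ?size_cat ?size_nseq => lt.
  by symmetry; apply/asboolP; exists (t0 - 1).
rewrite nth_nseq_cat; case: ifP => kj.
  symmetry; apply/asboolF => -[t E].
  have [h|h] : t < t0 \/ t0 <= t by lia.
    by have := p'_le0 t h; lia.
  by have := p_ge0 t h; rewrite p'_ge // in E; lia.
rewrite Hw; last by rewrite /= in lt *; lia.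
apply: asbool_equiv_eq; split => -[t E].
  have h : t0 <= t by rewrite leNgt; apply/negP => /p_lt0; lia.
  by exists t; rewrite p'_ge //; lia.
have [h|h] : t < t0 \/ t0 <= t by lia.
  by have := p'_le0 t h; lia.
by exists t; rewrite p'_ge // in E; lia.
Qed.

End Realizable.

Section LowerBound.
Variable b : nat -> bool.

Definition real_count (j n : nat) : nat :=
  count (fun w => `[< realizable b (true :: nseq j false ++ w) >]) (bitseqs n).

Lemma real_countS j n : (real_count j.+1 n + b j * real_count 0 n <= real_count j n.+1)%N.
Proof.
have nseqS (w : bitseq) : nseq j false ++ false :: w = nseq j.+1 false ++ w.
  by elim: (j) => //= i ->.
rewrite /real_count count_bitseqsS; apply: leq_add.
  by apply/eq_leq/eq_count => w; rewrite /= nseqS.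
case bj: (b j); rewrite ?mul1n ?mul0n //.
by apply: sub_count => w /asboolP Hw; apply/asboolP; exact: realizable_cons.
Qed.

Lemma real_count_base m j : b m -> ((j <= m)%N <= real_count j 0)%N.
Proof.
move=> bm; rewrite /real_count /= cats0 addn0; case jm: (j <= m)%N => //.
by rewrite (asboolT (realizable_one_gap bm jm)).
Qed.

Lemma real_count_unroll m n j : b m ->
  ((j + n <= m)%N + \sum_(i < n | b (j + i)%N) real_count 0 (n.-1 - i) <= real_count j n)%N.
Proof.
move=> bm; elim: n j => [|n IHn] j; first by rewrite big_ord0 !addn0; exact: real_count_base.
apply: leq_trans (real_countS j n).
have IH := IHn j.+1; rewrite addSn -addnS in IH.
rewrite big_mkcond big_ord_recl /= subn0 addn0.
under eq_bigr => i _ do rewrite /bump leq0n add1n addnS -addSn subnS predn_sub.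
rewrite -big_mkcond /=.
by case: (b j) IH; rewrite ?mul1n ?mul0n ?addn0 // => IH; rewrite addnCA addnC leq_add2r.
Qed.

Variables (R : realFieldType) (y : R).
Hypothesis y_gt1 : 1 < y.

Let y_gt0 : 0 < y. Proof. exact: lt_trans y_gt1. Qed.

Lemma real_count0_ge m : b m -> 1 <= gap_psum b y m.+1 ->
  forall n, y ^+ n / y ^+ m <= (real_count 0 n)%:R.
Proof.
move=> bm psum_ge1 n; elim/ltn_ind: n => n IHn.
have := real_count_unroll n 0 bm; rewrite !add0n.
case: (leqP n m) => [nm|mn] /= count_ge.
  apply: le_trans (_ : 1 <= _); last by rewrite ler1n; apply: leq_trans count_ge.
  by rewrite ler_pdivrMr ?exprn_gt0 // mul1r ler_eXn2l.
apply: le_trans (_ : (\sum_(i < n | b i) real_count 0 (n.-1 - i))%:R <= _); last first.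
  by rewrite ler_nat.
rewrite natr_sum (big_pred_natr b (fun i => (real_count 0 (n.-1 - i))%:R)).
apply: (@le_trans _ _ (\sum_(i < n) (b i)%:R * ((y ^+ m)^-1 * y ^+ (n.-1 - i)))); last first.
  apply: ler_sum => i _; apply: ler_wpM2l; first exact: ler0n.
  by rewrite mulrC; apply: IHn; have := ltn_ord i; lia.
rewrite gap_psum_convolution ?gt_eqF // [_^-1 * _]mulrC -[X in X <= _]mulr1 ler_wpM2l //.
  by rewrite divr_ge0 ?exprn_ge0 ?ltW.
by apply: le_trans psum_ge1 _; apply: gap_psum_mono.
Qed.

End LowerBound.

Lemma card_words_ge_geom (R : realFieldType) (b : nat -> bool) (y : R) N :
  1 < y -> 1 <= gap_psum b y N ->
  exists2 beta : R, 0 < beta & forall n, beta * y ^+ n.+1 <= #|words (gap_shift [set k | b k]) n.+1|%:R.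
Proof.
move=> y1 HN; have y0 : 0 < y by apply: lt_trans y1.
have [m bm Hm] := gap_psum_witness ltr01 HN.
exists (y ^+ m.+1)^-1; first by rewrite invr_gt0 exprn_gt0.
move=> n; have -> : (y ^+ m.+1)^-1 * y ^+ n.+1 = y ^+ n / y ^+ m.
  by rewrite !exprS; field; rewrite expf_neq0 ?gt_eqF.
apply: le_trans (real_count0_ge y1 bm Hm n) _; rewrite ler_nat.
by apply: leq_trans (card_words_ge b n.+1); rewrite count_bitseqsS leq_addl.
Qed.

Definition periodic_point (s : nat) : bipoint := fun i => `[< exists t : int, t * s.+1%:Z = i >].

Lemma periodic_point_in_gap_shift (b : nat -> bool) s :
  b s -> gap_shift [set k | b k] (periodic_point s).
Proof.
move=> bs; exists (fun t => t * s.+1%:Z); split.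
  by move=> t; exists s => //; rewrite mulrDl mul1r; lia.
by move=> i; split => [/asboolP|/asboolP].
Qed.

Lemma gap_shift_periodic_point (b : nat -> bool) s :
  gap_shift [set k | b k] (periodic_point s) -> b s.
Proof.
move=> [p [Hp Hx]]; apply: (gap_seq_gap Hp Hx (u := 0)).
- by apply/asboolP; exists 0; rewrite mul0r.
- by apply/asboolP; exists 1; rewrite mul1r add0r.
move=> t /andP[t0 ts]; apply/asboolF => -[u]; rewrite add0r => ut.
by have := @mulz_out_0m s.+1%:Z u isT; lia.
Qed.

Lemma gap_shift_sub (a1 a2 : nat -> bool) :
  gap_shift [set k | a1 k] `<=` gap_shift [set k | a2 k] -> forall s, a1 s -> a2 s.
Proof. by move=> sub s /periodic_point_in_gap_shift/sub/gap_shift_periodic_point. Qed.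

(** * Growth rates and entropy *)

Section LogGrowth.
Variable R : realType.
Implicit Types (u v : R) (c : nat -> R).

Let ln2_gt0 : 0 < ln (2 : R). Proof. by rewrite ln_gt0 // ltr1n. Qed.

Lemma ler_log2 u v : 0 < u -> 0 < v -> (log2 u <= log2 v) = (u <= v).
Proof. by move=> u0 v0; rewrite /log2 ler_pM2r ?invr_gt0 // ler_ln ?posrE. Qed.

Lemma log2_ge0 u : 1 <= u -> 0 <= log2 u.
Proof. by move=> u1; apply: divr_ge0; [exact: ln_ge0 | exact: ltW]. Qed.

Lemma log2M u v : 0 < u -> 0 < v -> log2 (u * v) = log2 u + log2 v.
Proof. by move=> u0 v0; rewrite /log2 lnM ?posrE // mulrDl. Qed.

Lemma log2X u n : 0 < u -> log2 (u ^+ n) = n%:R * log2 u.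
Proof. by move=> u0; rewrite /log2 lnXn // mulr_natl mulrnAl. Qed.

Lemma log2_mul_expR u s : 0 < u -> log2 (u * expR (s * ln 2)) = log2 u + s.
Proof.
by move=> u0; rewrite log2M ?expR_gt0 // /log2 expRK mulfK ?gt_eqF.
Qed.

Lemma log2_ratio_lt c (C z : R) : 1 <= C -> 1 <= z -> (forall n, 0 <= c n) ->
  (forall n, c n <= C * z ^+ n) ->
  forall e, 0 < e -> \forall n \near \oo, log2 (c n) / n%:R < log2 z + e.
Proof.
move=> C1 z1 c_ge0 c_le e e0.
have C0 : 0 < C by apply: lt_le_trans C1.
have z0 : 0 < z by apply: lt_le_trans z1.
have bound n : log2 (c n) <= log2 C + n%:R * log2 z.
  have [cn0|cn_gt0] := eqVneq (c n) 0.
    rewrite cn0 {1}/log2 ln0 // mul0r.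
    by apply: addr_ge0; [exact: log2_ge0 | exact: mulr_ge0 (ler0n _ _) (log2_ge0 z1)].
  have zn : 0 < z ^+ n by rewrite exprn_gt0.
  rewrite -log2X // -log2M // ler_log2 ?mulr_gt0 //.
  by rewrite lt0r cn_gt0 c_ge0.
near=> n.
have n0 : 0 < n%:R :> R by near: n; exact: nbhs_infty_gtr.
have large : log2 C / e < n%:R by near: n; exact: nbhs_infty_gtr.
rewrite ltr_pdivrMr // in large; rewrite ltr_pdivrMr //.
by have := bound n; lra.
Unshelve. all: by end_near.
Qed.

Lemma log2_ratio_gt c (beta y : R) : 0 < beta -> 0 < y ->
  (forall n, beta * y ^+ n.+1 <= c n.+1) ->
  forall e, 0 < e -> \forall n \near \oo, log2 y - e < log2 (c n) / n%:R.
Proof.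
move=> beta0 y0 c_ge e e0.
near=> n.
have n0 : (0 < n)%N by near: n; exists 1%N.
have large : - log2 beta / e < n%:R by near: n; exact: nbhs_infty_gtr.
rewrite ltr_pdivrMr // in large.
have := c_ge n.-1; rewrite prednK // => c_ge_n.
have cpos : 0 < c n by apply: lt_le_trans c_ge_n; rewrite mulr_gt0 ?exprn_gt0.
have yn : 0 < y ^+ n by rewrite exprn_gt0.
move: c_ge_n; rewrite -ler_log2 ?mulr_gt0 // log2M // log2X //.
by rewrite ltr_pdivlMr ?ltr0n //; lra.
Unshelve. all: by end_near.
Qed.

Lemma cvg_log2_ratio c l : 1 < l -> (forall n, 0 <= c n) ->
  (forall z, l < z -> exists2 C, 1 <= C & forall n, c n <= C * z ^+ n) ->
  (forall y, 1 < y -> y < l -> exists2 beta, 0 < beta & forall n, beta * y ^+ n.+1 <= c n.+1) ->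
  (fun n => log2 (c n) / n%:R) @ \oo --> log2 l.
Proof.
move=> l1 c_ge0 upper lower; have l0 : 0 < l by apply: lt_trans l1.
apply/cvgrPdist_lt => e e0; have e2 : 0 < e / 2 by rewrite divr_gt0.
pose z := l * expR (e / 2 * ln 2).
have lz : l < z by rewrite ltr_pMr // expR_gt1 mulr_gt0.
have [C C1 c_le] := upper z lz.
pose y := Num.max ((1 + l) / 2) (l * expR (- (e / 2) * ln 2)).
have ly : l * expR (- (e / 2) * ln 2) < l by rewrite gtr_pMr // expR_lt1 mulNr oppr_lt0 mulr_gt0.
have y1 : 1 < y by rewrite lt_max; apply/orP; left; lra.
have yl : y < l by rewrite gt_max; apply/andP; split; lra.
have [beta beta0 c_ge] := lower y y1 yl.
have log2y : log2 l - e / 2 <= log2 y.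
  rewrite -log2_mul_expR // ler_log2 ?mulr_gt0 ?expR_gt0 ?(lt_trans ltr01 y1) //.
  by rewrite le_max lexx orbT.
near=> n; rewrite ltr_distlC; apply/andP; split.
  have : log2 y - e / 2 < log2 (c n) / n%:R.
    by near: n; exact: (log2_ratio_gt beta0 (lt_trans ltr01 y1) c_ge).
  lra.
have : log2 (c n) / n%:R < log2 z + e / 2.
  by near: n; exact: (log2_ratio_lt C1 (ltW (lt_trans l1 lz)) c_ge0 c_le).
rewrite log2_mul_expR //; lra.
Unshelve. all: by end_near.
Qed.

Lemma cvg_le_of_eventually_lt (u : nat -> R) L a : u @ \oo --> L ->
  (forall e, 0 < e -> \forall n \near \oo, u n < a + e) -> L <= a.
Proof.
move=> uL ev; apply/ler_addgt0Pr => e e0.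
rewrite -(cvg_lim _ uL) //; apply: limr_le; first exact: cvgP uL.
by near=> n; apply/ltW; near: n; exact: ev.
Unshelve. all: by end_near.
Qed.

Lemma cvg_ge_of_eventually_gt (u : nat -> R) L a : u @ \oo --> L ->
  (forall e, 0 < e -> \forall n \near \oo, a - e < u n) -> a <= L.
Proof.
move=> uL ev; apply/ler_addgt0Pr => e e0.
rewrite -lerBlDr -(cvg_lim _ uL) //; apply: limr_ge; first exact: cvgP uL.
by near=> n; apply/ltW; near: n; exact: ev.
Unshelve. all: by end_near.
Qed.

End LogGrowth.

Section Perturbation.
Variables (R : realType) (b : nat -> bool).

Lemma bernoulli_ineq (e : R) N : 0 <= e <= 1 -> 1 - N%:R * e <= (1 - e) ^+ N.
Proof.
move=> /andP[e0 e1]; elim: N => [|N IHN]; first by rewrite mul0r subr0 expr0.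
have e1' : 0 <= 1 - e by rewrite subr_ge0.
have := ler_wpM2r e1' IHN; rewrite exprSr -natr1.
have := ler0n R N; move: (N%:R) => n n0; nra.
Qed.

Lemma gap_psum_ge1_above (l : R) N : 0 < l -> 1 < gap_psum b l N ->
  exists2 y, l < y & 1 <= gap_psum b y N.
Proof.
move=> l0; set F := gap_psum b l N => F1.
have Fi : F * F^-1 = 1 by rewrite mulfV // gt_eqF // (lt_trans ltr01).
have Fi0 : 0 < F^-1 by rewrite invr_gt0 (lt_trans ltr01).
have Fi1 : F^-1 < 1 by rewrite invf_lt1 // (lt_trans ltr01).
have n0 := ler0n R N.
(* Bernoulli: (1 - eta)^N F >= (1 - N eta) F >= 1 for this eta. *)
pose eta := (1 - F^-1) / (N%:R + 1).
have eta1 : eta * (N%:R + 1) = 1 - F^-1 by rewrite mulfVK // gt_eqF //; lra.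
have eta0 : 0 < eta by rewrite divr_gt0 //; lra.
have eta_lt1 : eta < 1 by nra.
have ly : l < l / (1 - eta) by rewrite ltr_pdivlMr; [nra | lra].
exists (l / (1 - eta)) => //.
have := gap_psum_scale_ge b N l0 (ltW ly).
rewrite invf_div mulrCA divff ?mulr1 ?gt_eqF // -/F.
have := @bernoulli_ineq eta N ltac:(apply/andP; split; lra).
move: ((1 - eta) ^+ N) => P hP H; apply: le_trans H; nra.
Qed.

Lemma geom_tail_le (r : R) K N : 0 <= r -> r < 1 ->
  \sum_(k < N) ((K <= k)%N)%:R * r ^+ k.+1 <= r ^+ K.+1 / (1 - r).
Proof.
move=> r0 r1.
have telescope M : (\sum_(k < M) ((K <= k)%N)%:R * r ^+ k.+1) * (1 - r) + r ^+ (maxn M K).+1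
                   = r ^+ K.+1.
  elim: M => [|M IHM]; first by rewrite big_ord0 mul0r add0r max0n.
  rewrite big_ord_recr /=; case: (leqP K M) => KM.
    rewrite (maxn_idPl (leqW KM)); move: IHM; rewrite (maxn_idPl KM) => <-.
    by rewrite mul1r !exprS; ring.
  by rewrite (maxn_idPr KM) -[in RHS]IHM (maxn_idPr (ltnW KM)) mul0r addr0.
by rewrite ler_pdivlMr ?subr_gt0 // -(telescope N) lerDl exprn_ge0.
Qed.

Lemma gap_psum_tail_le (x0 x l : R) K N : 1 < x0 -> x0 <= x -> x <= l ->
  gap_psum b x N <= (l / x) ^+ K * gap_psum b l N + x0^-1 ^+ K.+1 / (1 - x0^-1).
Proof.
move=> x01 x0x xl; have x0_gt0 : 0 < x0 by apply: lt_trans x01.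
have x_gt0 : 0 < x by apply: lt_le_trans x0x.
have l_gt0 : 0 < l by apply: lt_le_trans xl.
have r0 : 0 <= x0^-1 by rewrite invr_ge0 ltW.
have r1 : x0^-1 < 1 by rewrite invf_lt1.
apply: le_trans (lerD (lexx _) (geom_tail_le K N r0 r1)).
rewrite /gap_psum mulr_sumr -big_split /=; apply: ler_sum => k _.
have bk0 : 0 <= (b k)%:R :> R by case: (b k).
have bk1 : (b k)%:R <= 1 :> R by case: (b k).
case: (leqP K k) => Kk.
  rewrite mul1r exprVn -[X in X <= _]add0r.
  apply: lerD.
    apply: mulr_ge0; first by rewrite exprn_ge0 // divr_ge0 // ltW.
    by rewrite mulr_ge0 // invr_ge0 exprn_ge0 // ltW.
  apply: le_trans (_ : x ^- k.+1 <= _).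
    by rewrite -[X in _ <= X]mul1r ler_wpM2r // invr_ge0 exprn_ge0 // ltW.
  by rewrite lef_pV2 ?posrE ?exprn_gt0 // lerXn2r // nnegrE ltW.
rewrite (_ : false%:R = 0 :> R) // mul0r addr0 mulrCA; apply: ler_wpM2l => //.
have -> : x ^- k.+1 = (l / x) ^+ k.+1 * l ^- k.+1.
  by rewrite exprMn exprVn; field; rewrite !expf_neq0 ?gt_eqF.
apply: ler_wpM2r; first by rewrite invr_ge0 exprn_ge0 // ltW.
by rewrite ler_weXn2l // ler_pdivlMr // mul1r.
Qed.

Lemma gap_psum_lt1_below (l q : R) : 1 < l -> q < 1 -> (forall N, gap_psum b l N <= q) ->
  exists2 x, 1 < x < l & exists2 q', q' < 1 & forall N, gap_psum b x N <= q'.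
Proof.
move=> l1 q1 Fq; have q0 : 0 <= q by apply: le_trans (Fq 0); rewrite /gap_psum big_ord0.
pose eps := 1 - q; have eps0 : 0 < eps by rewrite subr_gt0.
pose x0 := (1 + l) / 2; have x01 : 1 < x0 by rewrite /x0; lra.
have r0 : 0 < x0^-1 by rewrite invr_gt0; lra.
have r1 : x0^-1 < 1 by rewrite invf_lt1 //; lra.
have rn : `|x0^-1| < 1 by rewrite gtr0_norm.
have tail_pos : 0 < eps / 4 * (1 - x0^-1) by apply: mulr_gt0; lra.
have [K _ HK] := cvgr_lt _ (cvg_expr rn) _ tail_pos.
have tail : x0^-1 ^+ K.+1 / (1 - x0^-1) <= eps / 4.
  by rewrite ler_pdivrMr ?subr_gt0 //; apply/ltW/HK/leqnSn.
pose k : R := K.+1%:R; have k0 : 0 < k by rewrite ltr0n.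
pose eta := Num.min (eps / (4 * k)) ((l - 1) / (2 * l)).
have eta0 : 0 < eta by rewrite lt_min !divr_gt0 ?mulr_gt0 //; lra.
have eta_eps : K%:R * eta <= eps / 4.
  have : eta <= eps / (4 * k) by rewrite ge_min lexx.
  rewrite ler_pdivlMr ?mulr_gt0 // => h.
  have : K%:R <= k by rewrite ler_nat.
  nra.
have eta_l : l * eta <= (l - 1) / 2.
  have : eta <= (l - 1) / (2 * l) by rewrite ge_min lexx orbT.
  by rewrite ler_pdivlMr; lra.
pose x := l * (1 - eta).
have x0x : x0 <= x by rewrite /x /x0; nra.
have xl : x < l by rewrite /x; nra.
have PQ : (l / x) ^+ K * (1 - eta) ^+ K = 1.
  by rewrite -exprMn /x (_ : _ * _ = 1) ?expr1n //; field; apply/andP; split; rewrite gt_eqF //; nra.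
have Qge := @bernoulli_ineq eta K ltac:(apply/andP; split; nra).
have P0 : 0 <= (l / x) ^+ K by rewrite exprn_ge0 // divr_ge0; nra.
set P := (l / x) ^+ K in PQ P0 *; set Q := (1 - eta) ^+ K in PQ Qge.
exists x; first by apply/andP; split; lra.
exists (P * q + eps / 4); first by rewrite /eps in eps0 eta_eps Qge *; nra.
move=> N; apply: le_trans (gap_psum_tail_le K N x01 x0x (ltW xl)) _.
by apply: lerD => //; apply: ler_wpM2l.
Qed.

End Perturbation.

Section EntropyCharacterization.
Variables (R : realType) (b : nat -> bool) (l : R).
Hypothesis l_gt1 : 1 < l.

Let l_gt0 : 0 < l. Proof. exact: lt_trans l_gt1. Qed.

Lemma entropy_gap_shift :
  gap_psum b l N @[N --> \oo] --> (1 : R) -> has_entropy (gap_shift [set k | b k]) (log2 l).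
Proof.
move=> Fl; have F_le1 N : gap_psum b l N <= 1.
  rewrite -(cvg_lim _ Fl) //; apply: nondecreasing_cvgn_le; last exact: cvgP Fl.
  exact: gap_psum_mono.
apply: cvg_log2_ratio => // [z lz|y y1 yl].
  have z_gt0 : 0 < z by apply: lt_trans lz.
  apply: (@card_words_le_geom _ _ _ (l / z)); first exact: lt_trans lz.
    by rewrite ltr_pdivrMr // mul1r.
  move=> N; apply: le_trans (gap_psum_scale_le b N l_gt0 (ltW lz)) _.
  by rewrite ler_piMr // divr_ge0 // ltW.
have y0 : 0 < y by apply: lt_trans y1.
have yl1 : y / l < 1 by rewrite ltr_pdivrMr // mul1r.
have [N _ HN] := cvgr_gt _ Fl (y / l) yl1.
apply: (@card_words_ge_geom _ _ _ N y1).
have := gap_psum_scale_le b N y0 (ltW yl); have := HN N (leqnn N).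
rewrite -[X in X < _]mulr1 => /lt_le_trans/[apply].
by rewrite ltr_pM2l ?divr_gt0 // => /ltW.
Qed.

Lemma gap_psum_cvg_of_entropy : has_entropy (gap_shift [set k | b k]) (log2 l) ->
  gap_psum b l N @[N --> \oo] --> (1 : R).
Proof.
move=> Hent; have F_le1 N : gap_psum b l N <= 1.
  rewrite leNgt; apply/negP => /(gap_psum_ge1_above l_gt0) [y ly Fy].
  have y1 : 1 < y by apply: lt_trans ly.
  have [beta beta0 Hbeta] := card_words_ge_geom y1 Fy.
  have := cvg_ge_of_eventually_gt Hent (log2_ratio_gt beta0 (lt_trans ltr01 y1) Hbeta).
  by rewrite ler_log2 ?(lt_trans ltr01 y1) // leNgt ly.
have F_near1 e : 0 < e -> exists N, 1 - e < gap_psum b l N.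
  move=> e0; have [//|noN] := pselect (exists N, 1 - e < gap_psum b l N).
  have Fq N : gap_psum b l N <= 1 - e by rewrite leNgt; apply/negP => ?; apply: noN; exists N.
  have e1 : 1 - e < 1 by rewrite gtrBl.
  have [x /andP[x1 xl] [q q1 Fxq]] := gap_psum_lt1_below l_gt1 e1 Fq.
  have [C C1 HC] := card_words_le_geom x1 q1 Fxq.
  have := cvg_le_of_eventually_lt Hent (log2_ratio_lt C1 (ltW x1) (fun n => ler0n _ _) HC).
  by rewrite ler_log2 ?(lt_trans ltr01 x1) // leNgt xl.
apply/cvgrPdist_lt => e e0; have [N FN] := F_near1 e e0.
near=> n; have Fn : gap_psum b l N <= gap_psum b l n.
  by apply: gap_psum_mono => //; near: n; exists N.
by rewrite ger0_norm ?subr_ge0 ?F_le1 //; lra.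
Unshelve. all: by end_near.
Qed.

End EntropyCharacterization.

Unset Implicit Arguments.
Theorem proposition4p1 (R : realType) (lambda : R) :
  1 < lambda < 2 ->
  set_bij
    [set a : nat -> bool |
       (fun N : nat => \sum_(k < N) ((a k)%:R * lambda ^- k.+1)) @ \oo --> (1 : R)]
    [set X : set bipoint | exists S : set nat,
       S !=set0 /\ X = gap_shift S /\ has_entropy X (log2 lambda)]
    (fun a : nat -> bool => gap_shift [set k | a k]).
Proof.
move=> /andP[l1 _]; split.
- move=> a Fa; exists [set k | a k]; split; last by split=> //; exact: entropy_gap_shift.
  have half1 : 2^-1 < 1 :> R by rewrite invf_lt1 ?ltr1n.
  have [N _ FN] := cvgr_gt _ Fa _ half1.
  have half0 : 0 < 2^-1 :> R by rewrite invr_gt0.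
  have [k ak _] := gap_psum_witness half0 (ltW (FN N (leqnn N))).
  by exists k.
- move=> a1 a2 _ _ E; apply/funext => s.
  by apply/idP/idP; apply: gap_shift_sub; rewrite E.
- move=> _ [S [[s Ss] [-> Hent]]].
  have ES : [set k | `[< S k >]] = S by apply/seteqP; split => k /asboolP.
  exists (fun k => `[< S k >]); last by rewrite /= ES.
  by apply: gap_psum_cvg_of_entropy l1 _; rewrite ES.
Qed.
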